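(* Let $m\geq 3$ be an integer and let $\{X_n\}_{n\in\mathbb{N}}$ be a sequence of finite connected $2$-connected graphs such that, for each $n$, the number of maximal spanning trees of $X_n$ not containing a given edge $e$ is the same for all edges $e$ of $X_n$. Let $\widetilde{X}_n$ be the $\mathbb{Z}_m$-homology cover of $X_n$, equipped with its graph metric. If $\mathrm{girth}(X_n)\to\infty$ as $n\to\infty$, then the coarse disjoint union $\bigsqcup_n\widetilde{X}_n$ coarsely embeds into Hilbert space.
   Context: A graph is $2$-connected if removing any single edge leaves it connected. The girth of a graph is the length of its shortest cycle. $\mathbb{Z}_m$-homology cover: let $X$ be a finite connected graph with a chosen orientation of each edge, let $T$ be a maximal spanning tree, and let $e_1,\dots,e_r$ be the edges not in $T$, which correspond to a free basis of $\pi_1(X)$. Let $K=\pi_1(X)/[\pi_1(X),\pi_1(X)]\pi_1(X)^m\cong\oplus^r\mathbb{Z}_m$ and $\rho:\pi_1(X)\to K$ the quotient map. The cover $\widetilde{X}$ has vertex set $V(X)\times K$ and edge set $E(X)\times K$; if $e\in T$ goes from $v$ to $w$, the edge $(e,k)$ joins $(v,k)$ and $(w,k)$; if $e\notin T$ goes from $v$ to $w$, then $(e,k)$ joins $(v,k)$ and $(w,\rho(e)k)$. Up to isomorphism commuting with the projection $\pi:\widetilde{X}\to X$, $(v,k)\mapsto v$, $(e,k)\mapsto e$, this does not depend on $T$ or the orientations. A coarse embedding is a map $F$ with non-decreasing $\rho_\pm:\mathbb{R}_+\to\mathbb{R}_+$, $\rho_\pm(t)\to\infty$, and $\rho_-(d(x,x'))\le\|F(x)-F(x')\|\le\rho_+(d(x,x'))$.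 The coarse disjoint union of metric spaces $X_n$ is $\bigsqcup_n X_n$ with the metric restricting to the given one on each $X_n$, and distances between distinct components larger than their diameters and tending to infinity. *)

From HB Require Import structures.
From mathcomp Require Import all_boot all_order all_algebra.
From Stdlib Require Import Reals ClassicalEpsilon.

Set Implicit Arguments.
Unset Strict Implicit.
Unset Printing Implicit Defensive.

Definition pbool (P : Prop) : bool :=
  if excluded_middle_informative P then true else false.

Record graph := Graph {
  gV : finType;
  gE : finType;
  gsrc : gE -> gV;
  gtgt : gE -> gV }.

Section Graphs.
Variable G : graph.

Definition adjF (F : {set gE G}) : rel (gV G) := fun x y =>
  [exists e in F, ((gsrc e == x) && (gtgt e == y)) || ((gsrc e == y) && (gtgt e == x))].

Definition adj : rel (gV G) := adjF setT.

Definition connected_in (F : {set gE G}) : Prop :=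
  (0 < #|gV G|)%N /\ forall x y : gV G, connect (adjF F) x y.

Definition connected : Prop := connected_in setT.

Definition two_connected : Prop := forall e : gE G, connected_in [set~ e].

(* darts: an edge traversed forwards (true) or backwards (false) *)
Definition dstart (a : gE G * bool) : gV G :=
  if a.2 then gsrc a.1 else gtgt a.1.
Definition dend (a : gE G * bool) : gV G :=
  if a.2 then gtgt a.1 else gsrc a.1.

Definition is_cycle (c : seq (gE G * bool)) : Prop :=
  c <> [::] /\ uniq (map fst c) /\ uniq (map dstart c) /\
  path.cycle (fun a b => dend a == dstart b) c.

(* a (maximal) spanning tree: a connected acyclic spanning subgraph *)
Definition spanning_tree (T : {set gE G}) : Prop :=
  connected_in T /\ forall c, is_cycle c -> ~ all (fun a => a.1 \in T) c.

Definition n_trees_avoiding (e : gE G) : nat :=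
  #|[set T : {set gE G} | pbool (spanning_tree T /\ e \notin T)]|.

(* girth(G) >= g : every cycle has length at least g (acyclic: girth = oo) *)
Definition girth_ge (g : nat) : Prop :=
  forall c, is_cycle c -> (g <= size c)%N.

Fixpoint ball (x : gV G) (n : nat) : {set gV G} :=
  match n with
  | 0 => [set x]
  | n'.+1 => ball x n' :|: [set y | [exists z in ball x n', adj z y]]
  end.

(* least n with y in the ball of radius n around x (this is the path metric
   for connected graphs, where every vertex lies within distance < #|V|) *)
Definition gdist (x y : gV G) : nat :=
  find (fun n => y \in ball x n) (iota 0 #|gV G|).

Definition gdiam : nat := \max_(x : gV G) \max_(y : gV G) gdist x y.

End Graphs.

Section Cover.
Variables (m : nat) (G : graph) (T : {set gE G}).

Definition nontree := {e : gE G | e \notin T}.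
Definition coverK := {ffun nontree -> 'Z_m}.

Definition rho (e : gE G) : coverK :=
  [ffun f : nontree => if val f == e then @GRing.one [the pzSemiRingType of 'Z_m] else GRing.zero].

Definition homology_cover : graph :=
  @Graph (gV G * coverK)%type (gE G * coverK)%type
    (fun p => (gsrc p.1, p.2))
    (fun p => (gtgt p.1, if p.1 \in T then p.2 else GRing.add (rho p.1) p.2)).

End Cover.

Open Scope R_scope.

Definition in_l2 (f : nat -> R) : Prop :=
  exists L, infinite_sum (fun i => (f i) ^ 2) L.

Definition l2_dist_is (f g : nat -> R) (r : R) : Prop :=
  exists L, infinite_sum (fun i => (f i - g i) ^ 2) L /\ r = sqrt L.

Definition nondecr (rh : R -> R) : Prop :=
  forall s t, 0 <= s -> s <= t -> rh s <= rh t.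

Definition to_infty (rh : R -> R) : Prop :=
  forall M, exists t0, forall t, t0 <= t -> M <= rh t.

Definition coarse_embeds_l2 (X : Type) (d : X -> X -> R) : Prop :=
  exists (F : X -> nat -> R) (rm rp : R -> R),
    (forall x, in_l2 (F x)) /\
    (forall t, 0 <= t -> 0 <= rm t /\ 0 <= rp t) /\
    nondecr rm /\ nondecr rp /\ to_infty rm /\ to_infty rp /\
    forall x x', exists r, l2_dist_is (F x) (F x') r /\
                           rm (d x x') <= r /\ r <= rp (d x x').

Definition is_metric (X : Type) (d : X -> X -> R) : Prop :=
  (forall x y, 0 <= d x y) /\ (forall x y, d x y = 0 <-> x = y) /\
  (forall x y, d x y = d y x) /\ (forall x y z, d x z <= d x y + d y z).

Definition coarse_disjoint_union_metric (Y : nat -> graph)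
    (d : {n : nat & gV (Y n)} -> {n : nat & gV (Y n)} -> R) : Prop :=
  is_metric d /\
  (forall n (a b : gV (Y n)),
      d (existT _ n a) (existT _ n b) = INR (gdist a b)) /\
  (forall n k (a : gV (Y n)) (b : gV (Y k)), n <> k ->
      INR (gdiam (Y n)) < d (existT _ n a) (existT _ k b) /\
      INR (gdiam (Y k)) < d (existT _ n a) (existT _ k b)) /\
  (forall M, exists N, forall n k (a : gV (Y n)) (b : gV (Y k)),
      n <> k -> (N <= n + k)%nat -> M <= d (existT _ n a) (existT _ k b)).

Close Scope R_scope.

(* Fix a spanning tree T of a base graph G.  A vertex x of the Z_m-homology
   cover gets a potential: a function E(G) -> Z_m that increases by exactly 1
   at e when x moves across a lift of e (its tree part records on which side
   of each tree edge x.1 lies, its sheet part winds around the non-tree edges).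
   The potential determines x, so the Hamming distance D(x, y) of potentials
   is a metric with D <= graph distance; and when D(x, y) < girth(G) the
   difference of the potentials is a forest with boundary y.1 - x.1, whose leaf
   at x.1 shows how to move x one step towards y, so the graph distance is
   at most D.  Embedding x as the indicator of the graph of its potential gives
   squared l^2 distance 2 D(x, y).  Placing the n-th cover in its own block of
   l^2(N), raised by an extra coordinate, yields a coarse embedding of the
   coarse disjoint union as soon as girth(X_n) -> oo: the lower control comes
   from D = distance below the girth, the upper one from D <= distance and the
   separation of the components. *)

From HB Require Import structures.
From mathcomp Require Import all_boot all_order all_algebra.
From Stdlib Require Import Reals Lra Lia ClassicalEpsilon.
From mathcomp Require Import zify ring.

Set Implicit Arguments.
Unset Strict Implicit.
Unset Printing Implicit Defensive.
Import GRing.Theory.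

Section Walks.
Variable G : graph.
Implicit Types (u v w x y z : gV G) (e f : gE G) (a b : gE G * bool)
  (p q : seq (gE G * bool)).

Definition flip_dart a : gE G * bool := (a.1, ~~ a.2).

Fixpoint walk u p : bool :=
  if p is a :: p' then (dstart a == u) && walk (dend a) p' else true.

Definition walk_verts u p : seq (gV G) := u :: map (@dend G) p.
Definition walk_end u p : gV G := last u (map (@dend G) p).

Definition incident e z : bool := (gsrc e == z) || (gtgt e == z).

Lemma incident_dart a z : incident a.1 z -> z = dstart a \/ z = dend a.
Proof. by case: a => e [] /=; rewrite /incident /dstart /dend /= => /orP [] /eqP ->; auto. Qed.

Lemma incident_dstart a : incident a.1 (dstart a).
Proof. by case: a => e []; rewrite /incident /dstart /= eqxx ?orbT. Qed.

Lemma dstart_flip a : dstart (flip_dart a) = dend a.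
Proof. by case: a => e []. Qed.

Lemma dend_flip a : dend (flip_dart a) = dstart a.
Proof. by case: a => e []. Qed.

Lemma walk_avoids_edge u p z e :
  walk u p -> z \notin walk_verts u p -> incident e z -> e \notin map fst p.
Proof.
elim: p u => [//|a p IH] u /= /andP [/eqP a_start p_walk].
rewrite /walk_verts /= in_cons negb_or => /andP [z_neq_u z_notin] e_at_z.
apply/negP => /orP [/eqP e_eq|]; last by apply/negP; exact: (IH (dend a)).
subst e; case: (incident_dart e_at_z) => z_eq.
  by move: z_neq_u; rewrite z_eq a_start eqxx.
by move: z_notin; rewrite z_eq inE eqxx.
Qed.

Lemma walk_cat u p q : walk u (p ++ q) = walk u p && walk (walk_end u p) q.
Proof. by elim: p u => [//|a p IH] u /=; rewrite IH andbA. Qed.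

Lemma walk_end_cat u p q : walk_end u (p ++ q) = walk_end (walk_end u p) q.
Proof. by rewrite /walk_end map_cat last_cat. Qed.

Lemma walk_dstarts u p :
  walk u p -> rcons (map (@dstart G) p) (walk_end u p) = walk_verts u p.
Proof.
elim: p u => [//|a p IH] u /= /andP [/eqP a_start p_walk].
by rewrite a_start (IH _ p_walk).
Qed.

Lemma walk_path a p : walk (dend a) p -> path (fun a b => dend a == dstart b) a p.
Proof.
elim: p a => [//|b p IH] a /= /andP [b_start p_walk].
by rewrite eq_sym b_start /= IH.
Qed.

Lemma close_cycle u p a :
  walk u p -> uniq (walk_verts u p) -> uniq (map fst p) ->
  dstart a = walk_end u p -> dend a = u -> a.1 \notin map fst p ->
  is_cycle (rcons p a).
Proof.
move=> p_walk p_vuniq p_euniq a_start a_end a_fresh.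
split; first by case: p {p_walk p_vuniq p_euniq a_start a_fresh}.
split; first by rewrite map_rcons rcons_uniq a_fresh p_euniq.
split; first by rewrite map_rcons a_start (walk_dstarts p_walk).
case: p p_walk {p_vuniq p_euniq a_fresh} a_start => [|b p] /=.
  by move=> _ a_start; rewrite /= andbT a_end a_start.
move=> /andP [/eqP b_start p_walk] a_start.
rewrite !rcons_path walk_path //= last_rcons a_start /walk_end /= last_map.
by rewrite eqxx a_end b_start eqxx.
Qed.

Lemma walk_end_take u p i :
  i <= size p -> walk_end u (take i p) = nth u (walk_verts u p) i.
Proof.
elim: p u i => [|a p IH] u [|i] //= i_le.
by rewrite /walk_end /= -/(walk_end _ _) IH //; apply: set_nth_default; rewrite /= size_map.
Qed.

Lemma walk_rev u p : walk u p -> walk (walk_end u p) (rev (map flip_dart p)).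
Proof.
elim/last_ind: p => [//|p a IH].
rewrite -cats1 walk_cat /= andbT => /andP [p_walk /eqP a_start].
rewrite map_cat rev_cat /= walk_end_cat /= dstart_flip eqxx dend_flip a_start /=.
exact: IH.
Qed.

Lemma walk_verts_rev u p :
  walk u p -> walk_verts (walk_end u p) (rev (map flip_dart p)) = rev (walk_verts u p).
Proof.
elim/last_ind: p => [//|p a IH].
rewrite -cats1 walk_cat /= andbT => /andP [p_walk /eqP a_start].
rewrite map_cat rev_cat /= walk_end_cat /= {1}/walk_verts /= dend_flip a_start.
by rewrite -/(walk_verts _ _) IH // /walk_verts map_cat -cat_cons rev_cat.
Qed.

Lemma walk_end_rev u p : walk u p -> walk_end (walk_end u p) (rev (map flip_dart p)) = u.
Proof.
move=> p_walk; have := congr1 (last (walk_end u p)) (walk_verts_rev p_walk).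
by rewrite /walk_end /walk_verts /= => ->; rewrite rev_cons last_rcons.
Qed.

Definition spath (D : pred (gE G)) u p : bool :=
  [&& walk u p, uniq (walk_verts u p), uniq (map fst p) & all (fun a => D a.1) p].

Lemma spath_rev D u p : spath D u p -> spath D (walk_end u p) (rev (map flip_dart p)).
Proof.
case/and4P => p_walk p_vuniq p_euniq p_D; apply/and4P; split.
- exact: walk_rev.
- by rewrite walk_verts_rev // rev_uniq.
- by rewrite map_rev -map_comp rev_uniq.
- by rewrite all_rev all_map.
Qed.

Lemma spath_take D u p i : spath D u p -> spath D u (take i p).
Proof.
case/and4P => p_walk p_vuniq p_euniq p_D; apply/and4P; split.
- by move: p_walk; rewrite -{1}(cat_take_drop i p) walk_cat => /andP [].
- by move: p_vuniq; rewrite /walk_verts map_take => /(take_uniq i.+1).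
- by rewrite map_take take_uniq.
- by move: p_D; rewrite -{1}(cat_take_drop i p) all_cat => /andP [].
Qed.

End Walks.

Section Forest.
Variables (G : graph) (D : pred (gE G)).
Hypothesis D_acyclic : forall c, is_cycle c -> all (fun a => D a.1) c -> False.
Implicit Types (u v : gV G) (e f : gE G) (a b : gE G * bool) (p : seq (gE G * bool)).

Definition leaf u e : bool :=
  [&& D e, incident e u & [forall f, (D f && incident f u) ==> (f == e)]].

Lemma forest_noloop e : D e -> gsrc e != gtgt e.
Proof.
move=> De; apply/negP => /eqP e_loop.
apply: (D_acyclic (c := [:: (e, true)])); last by rewrite /= De.
by do 3?split => //=; rewrite /dend /dstart /= e_loop eqxx.
Qed.

Lemma dart_into u f : incident f u -> exists2 a : gE G * bool, a.1 = f & dend a = u.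
Proof.
rewrite /incident; case: (boolP (gsrc f == u)) => [/eqP <- _|_ /= /eqP <-].
  by exists (f, false).
by exists (f, true).
Qed.

(* A simple D-path either starts at a leaf or can be prolonged backwards:
   a D-edge at its start leading back onto the path would close a D-cycle. *)
Lemma grow_or_leaf u b p : spath D u (b :: p) ->
  leaf u b.1 \/ exists a, spath D (dstart a) (a :: b :: p).
Proof.
move=> bp_spath; have /and4P [bp_walk bp_vuniq bp_euniq bp_D] := bp_spath.
move: (bp_walk) => /= /andP [/eqP b_start p_walk].
case: (boolP [forall f, (D f && incident f u) ==> (f == b.1)]) => [unique_at_u|].
  left; apply/and3P; split => //; first by case/andP: bp_D.
  by rewrite -b_start incident_dstart.
case/forallPn => f; rewrite negb_imply => /andP [/andP [Df f_at_u] f_neq_b].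
have [a a_edge a_end] := dart_into f_at_u.
have f_fresh : f \notin map fst (b :: p).
  rewrite /= in_cons negb_or f_neq_b /=.
  by apply: (walk_avoids_edge p_walk _ f_at_u); case/andP: bp_vuniq.
case: (boolP (dstart a \in walk_verts u (b :: p))) => [a_on_path|a_off_path].
  exfalso; pose i := index (dstart a) (walk_verts u (b :: p)).
  have i_le : i <= size (b :: p).
    by move: a_on_path; rewrite -index_mem /walk_verts /= size_map ltnS.
  have /and4P [q_walk q_vuniq q_euniq q_D] := spath_take i bp_spath.
  have a_closes : dstart a = walk_end u (take i (b :: p)).
    by rewrite walk_end_take // nth_index.
  have a_new : a.1 \notin map fst (take i (b :: p)).
    by rewrite a_edge; apply: contra f_fresh; rewrite map_take; exact: mem_take.
  apply: (D_acyclic (close_cycle q_walk q_vuniq q_euniq a_closes a_end a_new)).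
  by rewrite all_rcons a_edge Df q_D.
right; exists a; apply/and4P; split.
- by rewrite /= eqxx a_end.
- by rewrite /walk_verts /= -/(walk_verts _ _) a_end a_off_path.
- by rewrite map_cons a_edge cons_uniq f_fresh.
- by rewrite /= a_edge Df.
Qed.

(* Prolonging repeatedly terminates, since simple paths have at most #|V| vertices. *)
Lemma extend_to_leaf u b p : spath D u (b :: p) ->
  exists u' q, spath D u' (q ++ b :: p) /\ leaf u' (head b q).1.
Proof.
have [k] := ubnP (#|gV G| - size (walk_verts u (b :: p))).
elim: k u b p => [//|k IH] u b p bound bp_spath.
case: (grow_or_leaf bp_spath) => [b_leaf|[a abp_spath]]; first by exists u, [::].
have [|u' [q [q_spath q_leaf]]] := IH (dstart a) a (b :: p) _ abp_spath.
  have /and4P [_ abp_vuniq _ _] := abp_spath.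
  have : size (walk_verts (dstart a) [:: a, b & p]) <= #|gV G|.
    by rewrite -(card_uniqP abp_vuniq) max_card.
  by move: bound; rewrite /walk_verts /= !size_map; lia.
by exists u', (rcons q a); rewrite cat_rcons; split => //; case: q q_spath q_leaf.
Qed.

(* A forest containing an edge has two distinct leaves: the two ends of a
   maximal simple path through that edge. *)
Lemma two_leaves e0 : D e0 ->
  exists u1 e1 u2 e2, [/\ u1 != u2, leaf u1 e1 & leaf u2 e2].
Proof.
move=> De0; pose b := (e0, true).
have b_spath : spath D (gsrc e0) [:: b].
  apply/and4P; split => //=; first by rewrite /dstart eqxx.
    by rewrite inE andbT /dend /= forest_noloop.
  by rewrite De0.
have [u1 [q1 [p1_spath leaf1]]] := extend_to_leaf b_spath.
set p1 := q1 ++ [:: b] in p1_spath.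
have p1_walk : walk u1 p1 by case/and4P: p1_spath.
have r_spath := spath_rev p1_spath.
set r := rev (map (@flip_dart G) p1) in r_spath.
have : r != [::] by rewrite /r /p1 map_cat rev_cat.
case r_eq : r => [//|b' r'] _; rewrite r_eq in r_spath.
have [u2 [q2 [p2_spath leaf2]]] := extend_to_leaf r_spath.
exists u1, (head b q1).1, u2, (head b' q2).1; split => //.
have /and4P [p2_walk p2_vuniq _ _] := p2_spath.
have p2_end : walk_end u2 (q2 ++ b' :: r') = u1.
  move: p2_walk; rewrite walk_cat walk_end_cat => /andP [_ /= /andP [/eqP <- _]].
  have /and4P [/= /andP [/eqP -> _] _ _ _] := r_spath.
  by rewrite -r_eq /r walk_end_rev.
apply/negP => /eqP u1_eq; move: p2_vuniq; rewrite /walk_verts cons_uniq => /andP [].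
rewrite -u1_eq -{1}p2_end /walk_end.
have -> : q2 ++ b' :: r' = head b' q2 :: behead (q2 ++ b' :: r') by case: q2 {p2_spath leaf2 p2_walk p2_end}.
by rewrite /= mem_last.
Qed.

End Forest.

Section Boundary.
Local Open Scope ring_scope.
Variables (G : graph) (Rg : nzRingType).
Implicit Types (c : gE G -> Rg) (u v w : gV G) (e : gE G).

Definition bd c u : Rg := \sum_(e : gE G) c e * ((gtgt e == u)%:R - (gsrc e == u)%:R).

Lemma eq_bd c1 c2 u : (forall e, c1 e = c2 e) -> bd c1 u = bd c2 u.
Proof. by move=> c12; apply: eq_bigr => e _; rewrite c12. Qed.

Lemma bd_add c1 c2 u : bd (fun e => c1 e + c2 e) u = bd c1 u + bd c2 u.
Proof. by rewrite /bd -big_split /=; apply: eq_bigr => e _; rewrite mulrDl. Qed.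

Lemma bd_opp c u : bd (fun e => - c e) u = - bd c u.
Proof. by rewrite /bd -sumrN; apply: eq_bigr => e _; rewrite mulNr. Qed.

Lemma bd0 u : bd (fun _ => 0) u = 0.
Proof. by rewrite /bd big1 // => e _; rewrite mul0r. Qed.

Lemma bd_edge e0 u :
  bd (fun e => (e0 == e)%:R) u = (gtgt e0 == u)%:R - (gsrc e0 == u)%:R.
Proof.
rewrite /bd (bigD1 e0) //= eqxx mul1r [X in _ + X]big1 ?addr0 // => e e_neq.
by rewrite eq_sym (negbTE e_neq) mul0r.
Qed.

Variable c : gE G -> Rg.
Hypothesis supp_acyclic : forall cy, is_cycle cy -> all (fun a => c a.1 != 0) cy -> False.
Local Notation supp := (fun e => c e != 0).

Lemma leaf_bd u e : leaf supp u e ->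
  (gsrc e = u /\ bd c u = - c e) \/ (gtgt e = u /\ bd c u = c e).
Proof.
case/and3P => ce_neq0 e_at_u /forallP e_only.
have bd_e : bd c u = c e * ((gtgt e == u)%:R - (gsrc e == u)%:R).
  rewrite /bd (bigD1 e) //= [X in _ + X]big1 ?addr0 // => f f_neq.
  case: (boolP (c f == 0)) => [/eqP -> |cf_neq0]; first by rewrite mul0r.
  have := e_only f; rewrite cf_neq0 (negbTE f_neq) implybF /incident negb_or.
  by case/andP => /negbTE -> /negbTE ->; rewrite subrr mulr0.
have e_nonloop := forest_noloop (D := supp) supp_acyclic ce_neq0.
move: e_at_u; rewrite /incident; case: (boolP (gsrc e == u)) => [/eqP e_src _|_ /= /eqP e_tgt].
  have tgt_neq : (gtgt e == u) = false by apply/negbTE; rewrite -e_src eq_sym.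
  by left; split => //; rewrite bd_e tgt_neq -e_src eqxx sub0r mulrN1.
have src_neq : (gsrc e == u) = false by apply/negbTE; rewrite -e_tgt.
by right; split => //; rewrite bd_e src_neq e_tgt eqxx subr0 mulr1.
Qed.

Lemma boundary_leaf v w :
  (forall u, bd c u = (u == w)%:R - (u == v)%:R) -> (exists e, c e != 0) ->
  exists e, (gsrc e = v /\ c e = 1) \/ (gtgt e = v /\ c e = -1).
Proof.
move=> bd_c [e0 ce0_neq0].
have leaf_end u e : leaf supp u e -> (u == w) != (u == v).
  move=> u_leaf; have ce_neq0 : c e != 0 by case/and3P: u_leaf.
  apply: contra ce_neq0 => u_wv; have bd_u0 : bd c u = 0.
    by rewrite bd_c; move: u_wv; case: (u == w); case: (u == v); rewrite ?subrr.
  by case: (leaf_bd u_leaf) => [[_ bd_u]|[_ bd_u]]; move/eqP: bd_u0; rewrite bd_u ?oppr_eq0.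
have [e [v_leaf v_neq_w]] : exists e, leaf supp v e /\ v != w.
  have [u1 [e1 [u2 [e2 [u12 leaf1 leaf2]]]]] := two_leaves (D := supp) supp_acyclic ce0_neq0.
  have := leaf_end _ _ leaf2; have := leaf_end _ _ leaf1.
  case: (eqVneq u1 v) => [<-|u1v]; first by rewrite eqb_id => u1w _; exists e1.
  case: (eqVneq u2 v) => [<-|u2v]; first by move=> _; rewrite eqb_id => u2w; exists e2.
  rewrite !eqbF_neg !negbK => /eqP u1w /eqP u2w.
  by move: u12; rewrite u1w u2w eqxx.
exists e; have bd_v : bd c v = -1 by rewrite bd_c (negbTE v_neq_w) eqxx sub0r.
case: (leaf_bd v_leaf) => [[e_src]|[e_tgt]]; rewrite bd_v.
  by move/eqP; rewrite eqr_opp => /eqP <-; left.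
by move=> <-; right.
Qed.

End Boundary.

Section Metric.
Variable G : graph.
Implicit Types (x y z : gV G) (F : {set gE G}).

Lemma adjF_sym F : symmetric (adjF F).
Proof.
by move=> x y; apply/existsP/existsP => [] [e /andP [eF e_xy]]; exists e; rewrite eF orbC.
Qed.

Lemma vertex_path_walk F vs x : path (adjF F) x vs -> uniq (x :: vs) ->
  exists p, [/\ walk x p, map (@dend G) p = vs, uniq (map fst p) & all (fun a => a.1 \in F) p].
Proof.
elim: vs x => [|y vs IH] x /=; first by exists [::].
case/andP => /existsP [e /andP [eF e_xy]] vs_path /andP [x_fresh vs_uniq].
have [p [p_walk p_verts p_euniq p_F]] := IH y vs_path vs_uniq.
have [a [a_edge a_start a_end]] : exists a, [/\ a.1 = e, dstart a = x & dend a = y].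
  by case/orP: e_xy => /andP [/eqP <- /eqP <-]; [exists (e, true) | exists (e, false)].
exists (a :: p); split.
- by rewrite /= a_start eqxx a_end.
- by rewrite /= p_verts a_end.
- rewrite map_cons cons_uniq p_euniq andbT.
  apply: (walk_avoids_edge (z := x) p_walk); first by rewrite /walk_verts p_verts.
  by rewrite -a_start incident_dstart.
- by rewrite /= a_edge eF.
Qed.

Lemma connect_walk F x y : connect (adjF F) x y ->
  exists p, [/\ walk x p, walk_end x p = y, uniq (walk_verts x p), uniq (map fst p)
              & all (fun a => a.1 \in F) p].
Proof.
case/connectP => vs vs_path ->; case: (shortenP vs_path) => vs' vs'_path vs'_uniq _.
have [p [p_walk p_verts p_euniq p_F]] := vertex_path_walk vs'_path vs'_uniq.
by exists p; rewrite /walk_end /walk_verts p_verts.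
Qed.

Lemma ball_center x n : x \in ball x n.
Proof. by elim: n => [|n IH] /=; rewrite ?inE ?IH. Qed.

Lemma ball_S x n y : y \in ball x n.+1 = (y \in ball x n) || [exists z in ball x n, adj z y].
Proof. by rewrite /= in_setU in_set. Qed.

Lemma ball_step x n z y : z \in ball x n -> adj z y -> y \in ball x n.+1.
Proof. by move=> z_in zy; rewrite ball_S; apply/orP; right; apply/existsP; exists z; rewrite z_in. Qed.

Lemma ball_trans x z y i j : z \in ball x i -> y \in ball z j -> y \in ball x (i + j).
Proof.
move=> z_in; elim: j y => [|j IH] y; first by rewrite /= inE addn0 => /eqP ->.
rewrite ball_S addnS => /orP [y_in|/existsP [w /andP [w_in wy]]].
  by rewrite ball_S IH.
exact: ball_step (IH _ w_in) wy.
Qed.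

Lemma path_ball x (s : seq (gV G)) : path (@adj G) x s -> last x s \in ball x (size s).
Proof.
elim/last_ind: s => [|s z IH]; first by rewrite ball_center.
rewrite rcons_path last_rcons size_rcons => /andP [s_path sz].
exact: ball_step (IH s_path) sz.
Qed.

Lemma gdist_le x y n : y \in ball x n -> gdist x y <= n.
Proof.
move=> y_in; rewrite /gdist; case: (ltnP n #|gV G|) => n_lt; last first.
  by apply: leq_trans (find_size _ _) _; rewrite size_iota.
rewrite leqNgt; apply/negP => n_lt_find.
by have := before_find 0 n_lt_find; rewrite nth_iota // add0n y_in.
Qed.

Lemma gdist_ball x y : connect (@adj G) x y -> y \in ball x (gdist x y).
Proof.
case/connectP => s s_path ->; case: (shortenP s_path) => s' s'_path s'_uniq _.
have s'_small : size s' < #|gV G|.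
  by have := card_uniqP s'_uniq; rewrite /= => <-; apply: max_card.
have has_radius : has (fun n => last x s' \in ball x n) (iota 0 #|gV G|).
  by apply/hasP; exists (size s'); rewrite ?mem_iota ?add0n ?path_ball.
have := nth_find 0 has_radius; rewrite nth_iota ?add0n //.
by move: has_radius; rewrite has_find size_iota.
Qed.

Lemma gdist_diam x y : gdist x y <= gdiam G.
Proof.
exact: leq_trans (leq_bigmax (F := fun y => gdist x y) y)
                 (leq_bigmax (F := fun x => \max_y gdist x y) x).
Qed.

End Metric.

Section Cover.
Local Open Scope ring_scope.
Variables (m : nat) (G : graph) (T : {set gE G}).
Hypothesis T_tree : spanning_tree T.
Local Notation C := (homology_cover m T).
Implicit Types (v w : gV G) (e f : gE G) (k d : coverK m T) (x y z : gV C).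

Definition side e v : bool := connect (adjF (T :\ e)) (gtgt e) v.

Lemma side_tgt e : side e (gtgt e).
Proof. exact: connect0. Qed.

(* Removing a tree edge separates its endpoints: otherwise T has a cycle. *)
Lemma side_src e : e \in T -> ~~ side e (gsrc e).
Proof.
move=> eT; apply/negP => /connect_walk [p [p_walk p_end p_vuniq p_euniq p_F]].
have e_fresh : (e, true).1 \notin map fst p.
  by apply/mapP => -[a a_in a_e]; move: (allP p_F a a_in); rewrite -a_e in_setD1 eqxx.
have e_closes := close_cycle (a := (e, true)) p_walk p_vuniq p_euniq (esym p_end) erefl e_fresh.
apply: (T_tree.2 _ e_closes); rewrite all_rcons /= eT.
by apply: sub_all p_F => a; rewrite in_setD1 => /andP [].
Qed.

Lemma side_adj e e' : e' \in T -> e' != e -> side e (gsrc e') = side e (gtgt e').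
Proof.
move=> e'T e'_neq; have e'_adj : adjF (T :\ e) (gsrc e') (gtgt e').
  by apply/existsP; exists e'; rewrite in_setD1 e'_neq e'T !eqxx.
have adj_sym := sym_connect_sym (adjF_sym (T :\ e)).
apply/idP/idP => side_e'; first exact: connect_trans side_e' (connect1 e'_adj).
by apply: connect_trans side_e' _; rewrite adj_sym; exact: connect1.
Qed.

Definition winding e g : 'Z_m :=
  if e \in T then (side e (gsrc g))%:R - (side e (gtgt g))%:R else (g == e)%:R.

Definition potential x e : 'Z_m :=
  (if e \in T then (side e x.1)%:R else 0) + \sum_(f : nontree T) x.2 f * winding e (val f).

Lemma sum_rho e' (e'_out : e' \notin T) (F : gE G -> 'Z_m) :
  \sum_(f : nontree T) rho m T e' f * F (val f) = F e'.
Proof.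
rewrite (bigD1 (exist _ e' e'_out)) //= big1 ?addr0; first by rewrite /rho ffunE /= eqxx mul1r.
move=> f f_neq; rewrite /rho ffunE; case: eqP => [f_eq|_]; last by rewrite mul0r.
by case/eqP: f_neq; apply: val_inj.
Qed.

Lemma potential_edge (p : gE C) e :
  potential (gtgt p) e = potential (gsrc p) e + (p.1 == e)%:R.
Proof.
case: p => e' k; rewrite /potential /=; case: (boolP (e' \in T)) => e'T.
  case: (boolP (e \in T)) => eT; last first.
    by rewrite (_ : (e' == e) = false) ?addr0 //; apply: contraNF eT => /eqP <-.
  case: (eqVneq e' e) => [<-|e'_neq]; last by rewrite (side_adj e'T e'_neq) addr0.
  by rewrite side_tgt (negbTE (side_src e'T)) /= add0r addrC.
under eq_bigr => f _ do rewrite ffunE mulrDl.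
rewrite big_split /= sum_rho // /winding; case: (boolP (e \in T)) => eT.
  rewrite (_ : (e' == e) = false) ?addr0; last by apply: contraNF e'T => /eqP ->.
  by rewrite !addrA; congr (_ + _); rewrite addrAC subrr add0r.
by rewrite !add0r addrC.
Qed.

Definition diffset x y : {set gE G} := [set e | potential x e != potential y e].

Lemma diffset_adj x z : adj x z -> (#|diffset x z| <= 1)%nat.
Proof.
case/existsP => p /andP [_ /orP [] /andP [/eqP <- /eqP <-]];
  rewrite -(cards1 p.1); apply/subset_leq_card/subsetP => e; rewrite !inE potential_edge;
  by apply: contraR; rewrite eq_sym => /negbTE ->; rewrite addr0 eqxx.
Qed.

Lemma diffset_tri x z y : (#|diffset x y| <= #|diffset x z| + #|diffset z y|)%nat.
Proof.
apply: leq_trans (leq_card_setU _ _); apply/subset_leq_card/subsetP => e.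
rewrite !inE => xy_neq; apply/orP.
by case: (eqVneq (potential x e) (potential z e)) => [xz_eq|]; [right; rewrite -xz_eq | left].
Qed.

Lemma diffset_ball x y n : y \in ball x n -> (#|diffset x y| <= n)%nat.
Proof.
elim: n y => [|n IH] y.
  rewrite /= inE => /eqP ->; rewrite leqn0 cards_eq0; apply/eqP/setP => e.
  by rewrite !inE eqxx.
rewrite ball_S => /orP [y_in|/existsP [z /andP [z_in zy]]]; first exact: leqW (IH _ y_in).
by apply: leq_trans (diffset_tri x z y) _; rewrite -addn1 leq_add ?IH ?diffset_adj.
Qed.

(* The cover is connected: tree edges lift to every sheet, and going around
   the fundamental cycle of a non-tree edge f shifts the sheet by rho f. *)
Lemma tree_lift v w k : connect (adjF T) v w -> connect (@adj C) (v, k) (w, k).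
Proof.
case/connectP => s s_path ->; elim: s v s_path => [|u s IH] v /=; first by rewrite connect0.
case/andP => /existsP [e /andP [eT e_vu]] s_path; apply: connect_trans (IH _ s_path).
by apply/connect1/existsP; exists (e, k); rewrite inE /= eT !xpair_eqE eqxx !andbT.
Qed.

Lemma sheet_shift v k f : f \notin T -> connect (@adj C) (v, k) (v, rho m T f + k).
Proof.
have T_conn v' w : connect (adjF T) v' w by case: T_tree => [[_ T_conn] _].
move=> f_out; apply: connect_trans (tree_lift k (T_conn v (gsrc f))) _.
apply: connect_trans (tree_lift _ (T_conn (gtgt f) v)).
by apply/connect1/existsP; exists (f, k); rewrite inE /= (negbTE f_out) !eqxx.
Qed.

Lemma coverK_rho_basis k : k = \sum_(f : nontree T) rho m T (val f) *+ (k f : nat).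
Proof.
apply/ffunP => g; rewrite sum_ffunE (bigD1 g) //= big1 ?addr0.
  by rewrite ffunMnE /rho ffunE eqxx natr_Zp.
move=> f f_neq; rewrite ffunMnE /rho ffunE; case: eqP => [f_eq|_]; last by rewrite mul0rn.
by case/eqP: f_neq; apply: val_inj.
Qed.

Lemma sheet_shift_all v k d : connect (@adj C) (v, k) (v, d + k).
Proof.
rewrite {1}(coverK_rho_basis d); elim/big_rec: _ k => [|f d' _ IH] k.
  by rewrite add0r connect0.
rewrite -addrA; apply: connect_trans (IH k) _.
elim: (d f : nat) => [|n IHn]; first by rewrite mulr0n add0r connect0.
by rewrite mulrS -addrA; apply: connect_trans IHn (sheet_shift _ _ (valP f)).
Qed.

Lemma cover_connect x y : connect (@adj C) x y.
Proof.
have T_conn v' w : connect (adjF T) v' w by case: T_tree => [[_ T_conn] _].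
case: x y => [v k] [w k']; apply: connect_trans (tree_lift k (T_conn v w)) _.
by rewrite -[k'](subrK k); exact: sheet_shift_all.
Qed.

Lemma bd_potential x y u :
  bd (fun e => potential y e - potential x e) u = (y.1 == u)%:R - (x.1 == u)%:R.
Proof.
case/connectP: (cover_connect x y) => s s_path ->.
elim/last_ind: s s_path u => [|s z IH] s_path u.
  by rewrite /= (@eq_bd _ _ _ (fun _ => 0)) ?bd0 ?subrr // => e; rewrite subrr.
move: s_path; rewrite rcons_path last_rcons => /andP [s_path].
case/existsP => p /andP [_ /orP [] /andP [/eqP p_src /eqP p_tgt]].
  rewrite (@eq_bd _ _ _ (fun e => (potential (last x s) e - potential x e) + (p.1 == e)%:R)).
    by rewrite bd_add IH // bd_edge -p_tgt -p_src /=; ring.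
  by move=> e; rewrite -p_tgt potential_edge p_src; ring.
rewrite (@eq_bd _ _ _ (fun e => (potential (last x s) e - potential x e) + - (p.1 == e)%:R)).
  by rewrite bd_add IH // bd_opp bd_edge -p_tgt -p_src /=; ring.
by move=> e; rewrite -p_src -p_tgt potential_edge; ring.
Qed.

(* The potential determines the vertex: its base point is read off the
   boundary, and its sheet from the values at the non-tree edges. *)
Lemma potential_inj x y : (forall e, potential x e = potential y e) -> x = y.
Proof.
move=> pot_eq; have base_eq : x.1 = y.1.
  have := bd_potential x y y.1; rewrite (@eq_bd _ _ _ (fun _ => 0)) ?bd0; last first.
    by move=> e; rewrite pot_eq subrr.
  by rewrite eqxx; case: eqP => // _ /eqP; rewrite subr0 eq_sym oner_eq0.
case: x y pot_eq base_eq => v k [w k'] /= pot_eq <-; congr pair; apply/ffunP => f.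
have sheet_coord (kk : coverK m T) :
    \sum_(g : nontree T) kk g * winding (val f) (val g) = kk f.
  rewrite /winding (negbTE (valP f)) (bigD1 f) //= eqxx mulr1 big1 ?addr0 // => g g_neq.
  by case: eqP => [g_eq|_]; [case/eqP: g_neq; apply: val_inj | rewrite mulr0].
by have := pot_eq (val f); rewrite /potential /= (negbTE (valP f)) !add0r !sheet_coord.
Qed.

Lemma diffset_cross_tgt (p : gE C) x y : gsrc p = x ->
  potential y p.1 = potential (gtgt p) p.1 -> diffset (gtgt p) y = diffset x y :\ p.1.
Proof.
move=> <- agree; apply/setP => e; rewrite !inE; case: (eqVneq e p.1) => [->|e_neq] /=.
  by rewrite agree eqxx.
by rewrite eq_sym in e_neq; rewrite potential_edge (negbTE e_neq) addr0.
Qed.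

Lemma diffset_cross_src (p : gE C) x y : gtgt p = x ->
  potential y p.1 = potential (gsrc p) p.1 -> diffset (gsrc p) y = diffset x y :\ p.1.
Proof.
move=> <- agree; apply/setP => e; rewrite !inE; case: (eqVneq e p.1) => [->|e_neq] /=.
  by rewrite agree eqxx.
by rewrite eq_sym in e_neq; rewrite potential_edge (negbTE e_neq) addr0.
Qed.

Lemma diffset_le_gdist x y : (#|diffset x y| <= gdist x y)%nat.
Proof. exact: diffset_ball (gdist_ball (cover_connect x y)). Qed.

(* Below the girth, the potential difference of x and y is a forest whose
   boundary is y.1 - x.1, so it has a leaf edge at x.1 with coefficient +-1;
   moving x across that edge brings it one step closer to y. *)
Lemma approach_step g x y : girth_ge G g -> (0 < #|diffset x y| < g)%nat ->
  exists2 z, adj x z & #|diffset z y| = #|diffset x y|.-1.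
Proof.
move=> girth_g /andP [diff_pos diff_small].
pose c e := potential y e - potential x e.
have in_diff e : (e \in diffset x y) = (c e != 0) by rewrite inE /c subr_eq0 eq_sym.
have c_acyclic cy : is_cycle cy -> all (fun a => c a.1 != 0) cy -> False.
  move=> cy_cycle cy_supp; have := girth_g _ cy_cycle.
  have : (size cy <= #|diffset x y|)%nat.
    case: cy_cycle => _ [cy_euniq _]; rewrite -(size_map fst) -(card_uniqP cy_euniq).
    apply/subset_leq_card/subsetP => _ /mapP [a a_in ->].
    by rewrite in_diff; exact: (allP cy_supp).
  by move: diff_small; lia.
have c_bd u : bd c u = (u == y.1)%:R - (u == x.1)%:R.
  by rewrite bd_potential !(eq_sym u).
have c_nonzero : exists e, c e != 0.
  by case/card_gt0P: diff_pos => e; rewrite in_diff => ce; exists e.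
have drop_edge e : c e != 0 -> #|diffset x y :\ e| = #|diffset x y|.-1.
  by rewrite -in_diff => e_in; rewrite [#|diffset x y|](cardsD1 e) e_in.
have [e [[e_src ce] | [e_tgt ce]]] := boundary_leaf c_acyclic c_bd c_nonzero.
  pose p : gE C := (e, x.2); have p_src : gsrc p = x by rewrite /p /= e_src; case: (x).
  exists (gtgt p); first by apply/existsP; exists p; rewrite inE p_src !eqxx.
  rewrite (diffset_cross_tgt p_src) ?drop_edge ?ce ?oner_eq0 //.
  by rewrite potential_edge p_src eqxx mulr1n -ce /c addrC subrK.
pose k0 := if e \in T then x.2 else x.2 - rho m T e.
pose p : gE C := (e, k0); have p_tgt : gtgt p = x.
  by rewrite /p /k0 /= e_tgt; case: (e \in T); rewrite ?(addrC (rho _ _ _)) ?subrK; case: (x).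
exists (gsrc p); first by apply/existsP; exists p; rewrite inE p_tgt !eqxx orbT.
rewrite (diffset_cross_src p_tgt) ?drop_edge ?ce ?oppr_eq0 ?oner_eq0 //.
have := potential_edge p e; rewrite p_tgt eqxx mulr1n => pot_x.
have pot_y : potential y e = potential x e + c e by rewrite /c addrC subrK.
by rewrite /= pot_y ce pot_x addrK.
Qed.

Lemma ball_diffset g x y : girth_ge G g -> (#|diffset x y| < g)%nat ->
  y \in ball x #|diffset x y|.
Proof.
move=> girth_g; have [k] := ubnP #|diffset x y|.
elim: k x => [//|k IH] x diff_le diff_small.
case: (posnP #|diffset x y|) => [diff0|diff_pos].
  have -> : y = x.
    apply: potential_inj => e; apply/eqP; move/eqP: diff0; rewrite cards_eq0.
    by move=> /eqP /setP /(_ e); rewrite !inE eq_sym => /negbFE.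
  exact: ball_center.
have [z xz diff_z] := approach_step girth_g (introT andP (conj diff_pos diff_small)).
have z_near : y \in ball z #|diffset z y|.
  by apply: IH; rewrite diff_z; move: diff_le diff_small diff_pos; lia.
rewrite -(prednK diff_pos) -add1n -diff_z.
exact: ball_trans (ball_step (ball_center x 0) xz) z_near.
Qed.

Lemma gdist_le_diffset g x y : girth_ge G g -> (#|diffset x y| < g)%nat ->
  (gdist x y <= #|diffset x y|)%nat.
Proof. by move=> girth_g diff_small; apply/gdist_le/(ball_diffset girth_g). Qed.

End Cover.

(* Real addition is a commutative monoid law, so iterated sums of reals can
   use the generic big-operator library. *)
Lemma Rplus_associative : associative Rplus.
Proof. by move=> x y z; rewrite Rplus_assoc. Qed.

HB.instance Definition _ := Monoid.isComLaw.Build R 0%R Rplus Rplus_associative Rplus_comm Rplus_0_l.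

Local Open Scope R_scope.

Lemma sumR_ge0 (I : Type) (r : seq I) (P : pred I) (f : I -> R) :
  (forall i, P i -> 0 <= f i) -> 0 <= \big[Rplus/0]_(i <- r | P i) f i.
Proof. by move=> f_ge0; apply: big_ind => //; [lra | move=> *; lra]. Qed.

Lemma sumR_scale (I : Type) (r : seq I) (f : I -> R) k :
  \big[Rplus/0]_(i <- r) (k * f i) = k * \big[Rplus/0]_(i <- r) f i.
Proof.
apply: (big_ind2 (fun x y => x = k * y)) => //; first lra.
by move=> a b a' b' -> ->; lra.
Qed.

Lemma le_sqrt_of_sq M t : M * M <= t -> M <= sqrt t.
Proof.
move=> sq_le; apply: Rle_trans (Rle_abs M) _; rewrite -sqrt_Rsqr_abs.
by apply: sqrt_le_1_alt; rewrite /Rsqr.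
Qed.

Lemma INR_sum (I : Type) (r : seq I) (P : pred I) (f : I -> nat) :
  INR (\sum_(i <- r | P i) f i)%nat = \big[Rplus/0]_(i <- r | P i) INR (f i).
Proof. by apply: (big_morph INR) => // x y; rewrite plus_INR. Qed.

Lemma sumR_option (A : finType) (F : option A -> R) :
  \big[Rplus/0]_(b : option A) F b = F None + \big[Rplus/0]_(a : A) F (Some a).
Proof.
rewrite (bigD1 None) //=; congr (_ + _).
rewrite (reindex_omap Some (@id (option A))) => [|[a|] //].
by apply: eq_bigl => a; rewrite /= eqxx.
Qed.

Lemma infinite_sum_finite (s : nat -> R) B : (forall i, (B <= i)%nat -> s i = 0) ->
  infinite_sum s (\big[Rplus/0]_(0 <= i < B) s i).
Proof.
move=> s_vanish eps eps_pos; exists B => n /leP B_le_n.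
have partial n' : sum_f_R0 s n' = \big[Rplus/0]_(0 <= i < n'.+1) s i.
  by elim: n' => [|n' IH]; rewrite ?big_nat1 // big_nat_recr //= IH.
have tail : \big[Rplus/0]_(B <= i < n.+1) s i = 0.
  by rewrite big_nat_cond big1 // => i /andP [/andP [B_le _] _]; apply: s_vanish.
by rewrite partial (big_cat_nat _ (n := B)) //= ?tail ?Rplus_0_r ?R_dist_eq //; apply: leqW.
Qed.

(* Hilbert space as l^2(N), cut into consecutive finite blocks of sizes bsize n:
   a vector of the n-th block is placed at the offsets [boff n, boff n + bsize n). *)
Section Blocks.
Variable bsize : nat -> nat.

Definition boff n : nat := (\sum_(0 <= j < n) bsize j)%nat.

Definition in_block n i : bool := (boff n <= i < boff n + bsize n)%nat.

Definition place n (v : nat -> R) (i : nat) : R :=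
  if in_block n i then v (i - boff n)%nat else 0.

Lemma blocks_disjoint n k i : n != k -> ~~ (in_block n i && in_block k i).
Proof.
have block_before n' k' : (n' < k')%nat -> (boff n' + bsize n' <= boff k')%nat.
  move=> n'_lt; rewrite /boff -big_nat_recr //= (big_cat_nat _ (n := n'.+1) (m := 0) (p := k')) //=.
  exact: leq_addr.
rewrite /in_block; case: (ltngtP n k) => // [n_lt|k_lt] _.
  by have := block_before _ _ n_lt; apply: contraL => /andP [/andP [_ i_lt] /andP [k_le _]]; lia.
by have := block_before _ _ k_lt; apply: contraL => /andP [/andP [n_le _] /andP [_ i_lt]]; lia.
Qed.

Lemma sum_place n (v : nat -> R) B : (boff n + bsize n <= B)%nat ->
  \big[Rplus/0]_(0 <= i < B) place n v i = \big[Rplus/0]_(0 <= r < bsize n) v r.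
Proof.
move=> B_large.
have before : \big[Rplus/0]_(0 <= i < boff n) place n v i = 0.
  rewrite big_nat_cond big1 // => i /andP [/andP [_ i_lt] _].
  by rewrite /place /in_block leqNgt i_lt.
have after : \big[Rplus/0]_(boff n + bsize n <= i < B) place n v i = 0.
  rewrite big_nat_cond big1 // => i /andP [/andP [i_ge _] _].
  by rewrite /place /in_block ltnNge i_ge andbF.
have inside : \big[Rplus/0]_(boff n <= i < boff n + bsize n) place n v i
    = \big[Rplus/0]_(0 <= r < bsize n) v r.
  rewrite -{1}(add0n (boff n)) big_addn addKn big_nat_cond [RHS]big_nat_cond.
  apply: eq_bigr => i /andP [/andP [_ i_lt] _].
  by rewrite /place /in_block addnK leq_addl addnC ltn_add2l i_lt.
rewrite (big_cat_nat _ (n := boff n)) //=; last by lia.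
rewrite (big_cat_nat _ (n := boff n + bsize n) (m := boff n)) //= ?leq_addr //.
by rewrite before after inside; lra.
Qed.

Lemma in_l2_place n v : in_l2 (place n v).
Proof.
exists (\big[Rplus/0]_(0 <= i < boff n + bsize n) (place n v i) ^ 2).
apply: infinite_sum_finite => i i_ge; rewrite /place /in_block ltnNge i_ge andbF /=; lra.
Qed.

Lemma l2_dist_place n v w :
  l2_dist_is (place n v) (place n w) (sqrt (\big[Rplus/0]_(0 <= r < bsize n) (v r - w r) ^ 2)).
Proof.
have sq_diff i : (place n v i - place n w i) ^ 2 = place n (fun r => (v r - w r) ^ 2) i.
  by rewrite /place; case: ifP => _ //=; lra.
exists (\big[Rplus/0]_(0 <= i < boff n + bsize n) (place n v i - place n w i) ^ 2).
split; first by apply: infinite_sum_finite => i i_ge; rewrite sq_diff /place /in_block ltnNge i_ge andbF.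
by rewrite (eq_bigr _ (fun i _ => sq_diff i)) sum_place.
Qed.

Lemma l2_dist_place_orth n k v w : n != k ->
  l2_dist_is (place n v) (place k w)
    (sqrt (\big[Rplus/0]_(0 <= r < bsize n) v r ^ 2 + \big[Rplus/0]_(0 <= r < bsize k) w r ^ 2)).
Proof.
move=> n_neq_k; set B := maxn (boff n + bsize n) (boff k + bsize k).
have sq_split i : (place n v i - place k w i) ^ 2
    = place n (fun r => v r ^ 2) i + place k (fun r => w r ^ 2) i.
  have := blocks_disjoint i n_neq_k; rewrite /place.
  by case: (in_block n i); case: (in_block k i) => //= _; lra.
exists (\big[Rplus/0]_(0 <= i < B) (place n v i - place k w i) ^ 2); split.
  apply: infinite_sum_finite => i i_ge; rewrite sq_split /place /in_block.
  by rewrite !ltnNge (leq_trans (leq_maxl _ _) i_ge) (leq_trans (leq_maxr _ _) i_ge) !andbF; lra.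
rewrite (eq_bigr _ (fun i _ => sq_split i)).
by rewrite big_split /= !sum_place ?leq_maxl ?leq_maxr.
Qed.

End Blocks.

Lemma sum_graph_indicators (A B : finType) (f g : A -> B) :
  \big[Rplus/0]_(p : A * B) (INR (f p.1 == p.2) - INR (g p.1 == p.2)) ^ 2
    = 2 * INR #|[set a | f a != g a]|.
Proof.
have per_point a : \big[Rplus/0]_(b : B) (INR (f a == b) - INR (g a == b)) ^ 2
    = 2 * INR (f a != g a).
  case: (eqVneq (f a) (g a)) => [<-|fg_neq].
    by rewrite big1 /= => [|b _]; lra.
  rewrite (bigD1 (f a)) //= (bigD1 (g a)) /=; last by rewrite eq_sym fg_neq.
  rewrite big1 => [|b /andP [b_neq_f b_neq_g]]; last first.
    by rewrite eq_sym (negbTE b_neq_f) eq_sym (negbTE b_neq_g) /=; lra.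
  by rewrite eqxx eq_sym (negbTE fg_neq) eqxx /=; lra.
rewrite -(pair_bigA _ (fun a b => (INR (f a == b) - INR (g a == b)) ^ 2)) /=.
rewrite (eq_bigr _ (fun a _ => per_point a)) sumR_scale -INR_sum; congr (_ * INR _).
by rewrite -sum1_card [RHS]big_mkcond /=; apply: eq_bigr => a _; rewrite inE; case: (_ != _).
Qed.

(* The embedding of the coarse disjoint union of the covers: the n-th cover
   goes to the n-th block, with one coordinate for each pair (e, a) of an edge
   and a value in Z_m (the indicator of the graph of the potential, recentred
   at a base point x0 n) and one extra coordinate sqrt (height n) that lifts
   the whole block away from the others. *)
Section Embedding.
Variables (m : nat) (X : nat -> graph) (T : forall n, {set gE (X n)}).
Local Notation Cv n := (homology_cover m (T n)).
Variables (x0 : forall n, gV (Cv n)) (height : nat -> R).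
Hypothesis height_ge0 : forall n, 0 <= height n.

Definition coord_set n : finType := option (gE (X n) * 'Z_m).

Definition coordinate n (x : gV (Cv n)) (b : coord_set n) : R :=
  if b is Some p then INR (potential x p.1 == p.2) - INR (potential (x0 n) p.1 == p.2)
  else sqrt (height n).

Definition coord_size n : nat := #|coord_set n|.

Definition coord_vec n (x : gV (Cv n)) (r : nat) : R :=
  coordinate x (nth None (enum (coord_set n)) r).

Definition embed (z : {n & gV (Cv n)}) : nat -> R :=
  let: existT n x := z in place coord_size n (coord_vec x).

Lemma sum_coords n (F : coord_set n -> R) :
  \big[Rplus/0]_(0 <= r < coord_size n) F (nth None (enum (coord_set n)) r)
    = \big[Rplus/0]_(b : coord_set n) F b.
Proof. by rewrite /coord_size cardE -(big_nth None xpredT) big_enum; apply: eq_bigl. Qed.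

Lemma coordinate_dist n (x y : gV (Cv n)) :
  \big[Rplus/0]_(b : coord_set n) (coordinate x b - coordinate y b) ^ 2
    = 2 * INR #|diffset x y|.
Proof.
rewrite sumR_option -[RHS](sum_graph_indicators (potential x) (potential y)).
have base_coord : (coordinate x None - coordinate y None) ^ 2 = 0.
  by rewrite /coordinate Rminus_diag /=; lra.
rewrite base_coord Rplus_0_l.
have recentre a b c : (a - c - (b - c)) ^ 2 = (a - b) ^ 2 by nra.
by apply: eq_bigr => p _; rewrite recentre.
Qed.

Lemma coordinate_norm n (x : gV (Cv n)) :
  \big[Rplus/0]_(b : coord_set n) coordinate x b ^ 2
    = 2 * INR #|diffset x (x0 n)| + height n.
Proof.
rewrite sumR_option -(sum_graph_indicators (potential x) (potential (x0 n))).
by rewrite /= Rmult_1_r sqrt_sqrt // Rplus_comm.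
Qed.

Lemma embed_l2 z : in_l2 (embed z).
Proof. by case: z => n x; exact: in_l2_place. Qed.

Lemma embed_dist_same n (x y : gV (Cv n)) :
  l2_dist_is (embed (existT _ n x)) (embed (existT _ n y)) (sqrt (2 * INR #|diffset x y|)).
Proof. by rewrite -coordinate_dist -sum_coords; exact: l2_dist_place. Qed.

Lemma embed_dist_diff n k (x : gV (Cv n)) (y : gV (Cv k)) : n != k ->
  l2_dist_is (embed (existT _ n x)) (embed (existT _ k y))
    (sqrt ((2 * INR #|diffset x (x0 n)| + height n) + (2 * INR #|diffset y (x0 k)| + height k))).
Proof.
move=> n_neq_k; rewrite -!coordinate_norm -!sum_coords.
exact: l2_dist_place_orth.
Qed.

End Embedding.

Definition nat_up (t : R) : nat := Z.to_nat (up t).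
Definition nat_floor (t : R) : nat := (nat_up t).-1.

Lemma up_mono s t : s <= t -> (up s <= up t)%Z.
Proof.
move=> s_le_t; have [_ s_le] := archimed s; have [t_lt _] := archimed t.
case: (Z.le_gt_cases (up s) (up t)) => // up_gt.
have up_le : (up t <= up s - 1)%Z by lia.
by have := IZR_le _ _ up_le; rewrite minus_IZR /=; lra.
Qed.

Lemma nat_up_mono s t : s <= t -> (nat_up s <= nat_up t)%nat.
Proof. by move=> s_le_t; have := up_mono s_le_t; rewrite /nat_up; lia. Qed.

Lemma nat_floor_mono s t : s <= t -> (nat_floor s <= nat_floor t)%nat.
Proof. by move=> s_le_t; have := nat_up_mono s_le_t; rewrite /nat_floor; lia. Qed.

Lemma nat_floor_INR n : nat_floor (INR n) = n.
Proof.
have up_INR : up (INR n) = (Z.of_nat n + 1)%Z.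
  by symmetry; apply: tech_up; rewrite plus_IZR -INR_IZR_INZ /=; lra.
by rewrite /nat_floor /nat_up up_INR; lia.
Qed.

Lemma INR_nat_up t : 0 <= t -> INR (nat_up t) = IZR (up t).
Proof.
move=> t_ge0; have [up_gt _] := archimed t.
have up_pos : (0 <= up t)%Z by apply: le_IZR; lra.
by rewrite /nat_up INR_IZR_INZ Znat.Z2Nat.id.
Qed.

Lemma nat_up_gt t : 0 <= t -> t < INR (nat_up t).
Proof. by move=> t_ge0; rewrite INR_nat_up //; have [? _] := archimed t. Qed.

Lemma nat_floor_le t : 0 <= t -> INR (nat_floor t) <= t.
Proof.
move=> t_ge0; have [up_gt up_le] := archimed t.
have up_pos : (0 < up t)%Z by apply: lt_IZR; lra.
rewrite /nat_floor -subn1 minus_INR; last by apply/leP; rewrite /nat_up; lia.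
by rewrite INR_nat_up //=; lra.
Qed.

Lemma term_le_sumn (f : nat -> nat) N n : (n < N)%nat -> (f n <= \sum_(0 <= i < N) f i)%nat.
Proof.
move=> n_lt; rewrite (big_cat_nat _ (n := n)) //=; last exact: ltnW.
by rewrite (big_ltn n_lt); lia.
Qed.

Definition runmax (f : nat -> nat) (j : nat) : nat := \max_(i < j.+1) f i.

Lemma runmax_ge f j : (f j <= runmax f j)%nat.
Proof. exact: (leq_bigmax (F := fun i : 'I_j.+1 => f i) ord_max). Qed.

Lemma runmax_mono f j j' : (j <= j')%nat -> (runmax f j <= runmax f j')%nat.
Proof.
move=> j_le; apply/bigmax_leqP => i _.
have j_le' : (j.+1 <= j'.+1)%nat by rewrite ltnS.
exact: (leq_bigmax (F := fun i : 'I_j'.+1 => f i) (widen_ord j_le' i)).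
Qed.

Definition slow_inverse (h : nat -> nat) (j : nat) : nat :=
  \max_(g <- iota 0 j.+1 | (h g <= j)%nat) g.

Lemma slow_inverse_le h j : (slow_inverse h j <= j)%nat.
Proof. by apply/bigmax_leqP_seq => g; rewrite mem_iota add0n ltnS. Qed.

Lemma slow_inverse_mono h j j' : (j <= j')%nat -> (slow_inverse h j <= slow_inverse h j')%nat.
Proof.
move=> j_le; apply/bigmax_leqP_seq => g; rewrite mem_iota add0n ltnS => g_le hg_le.
by apply: leq_bigmax_seq; rewrite ?mem_iota ?add0n ?ltnS ?(leq_trans _ j_le).
Qed.

Lemma slow_inverse_ge h g : (g <= h g)%nat -> (g <= slow_inverse h (h g))%nat.
Proof. by move=> g_le; apply: leq_bigmax_seq; rewrite ?mem_iota ?add0n ?ltnS. Qed.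

Lemma slow_inverse_le_bound h j N :
  (forall g, (g <= j)%nat -> (h g <= j)%nat -> (g <= N)%nat) -> (slow_inverse h j <= N)%nat.
Proof. by move=> bound; apply/bigmax_leqP_seq => g; rewrite mem_iota add0n ltnS; exact: bound. Qed.

Section CoarseEmbedding.
Variables (m : nat) (X : nat -> graph) (T : forall n, {set gE (X n)}).
Local Notation Cv n := (homology_cover m (T n)).
Variable d : {n : nat & gV (Cv n)} -> {n : nat & gV (Cv n)} -> R.
Variable x0 : forall n, gV (Cv n).
Hypothesis girth_grows : forall g, exists N, forall n, (N <= n)%nat -> girth_ge (X n) g.
Hypothesis T_tree : forall n, spanning_tree (T n).
Hypothesis d_union : @coarse_disjoint_union_metric (fun n => Cv n) d.

Let d_ge0 a b : 0 <= d a b. Proof. by case: d_union => [[]]. Qed.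
Let d_sym a b : d a b = d b a. Proof. by case: d_union => [[_ [_ []]]]. Qed.
Let d_tri a b c : d a c <= d a b + d b c. Proof. by case: d_union => [[_ [_ [_ ]]]]. Qed.
Let d_component n (a b : gV (Cv n)) : d (existT _ n a) (existT _ n b) = INR (gdist a b).
Proof. by case: d_union => _ []. Qed.
Let d_far M : exists N, forall n k (a : gV (Cv n)) (b : gV (Cv k)),
  n <> k -> (N <= n + k)%nat -> M <= d (existT _ n a) (existT _ k b).
Proof. by case: d_union => _ [_ [_]]. Qed.

Definition diam n : nat := gdiam (Cv n).

Definition girth_index g : nat := proj1_sig (constructive_indefinite_description _ (girth_grows g)).

Lemma girth_index_spec g n : (girth_index g <= n)%nat -> girth_ge (X n) g.
Proof. exact: (proj2_sig (constructive_indefinite_description _ (girth_grows g))). Qed.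

(* Distances >= slack g only occur in covers of base girth >= g, where the
   Hamming distance of potentials is then at least g. *)
Definition slack g : nat := (\sum_(0 <= i < runmax girth_index g) diam i + g)%nat.
Definition lower_gauge (j : nat) : nat := slow_inverse slack j.

Lemma diffset_lower n (x y : gV (Cv n)) : (lower_gauge (gdist x y) <= #|diffset x y|)%nat.
Proof.
apply: slow_inverse_le_bound => g g_le slack_le; case: (posnP g) => [-> //|g_pos].
have n_large : (runmax girth_index g <= n)%nat.
  rewrite leqNgt; apply/negP => n_small.
  have := term_le_sumn diam n_small.
  by have := gdist_diam x y; move: slack_le; rewrite /slack /diam; lia.
have girth_g := girth_index_spec (leq_trans (runmax_ge girth_index g) n_large).
rewrite leqNgt; apply/negP => diff_small.
by have := gdist_le_diffset (T_tree n) girth_g diff_small; lia.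
Qed.

Definition sep_index j : nat := proj1_sig (constructive_indefinite_description _ (d_far (INR j))).

Lemma sep_index_spec j n k (a : gV (Cv n)) (b : gV (Cv k)) : n <> k ->
  (sep_index j <= n + k)%nat -> INR j <= d (existT _ n a) (existT _ k b).
Proof. exact: (proj2_sig (constructive_indefinite_description _ (d_far (INR j)))). Qed.

Definition height n : R := d (existT _ n (x0 n)) (existT _ 0%nat (x0 0%nat)) + INR (diam n).

Lemma height_ge0 n : 0 <= height n.
Proof. by apply: Rplus_le_le_0_compat; [exact: d_ge0 | exact: pos_INR]. Qed.

Definition block_bound N : R := \big[Rplus/0]_(0 <= i < N) (2 * INR (diam i) + height i).

Lemma block_term_ge0 i : 0 <= 2 * INR (diam i) + height i.
Proof. by have := pos_INR (diam i); have := height_ge0 i; lra. Qed.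

Lemma block_bound_ge0 N : 0 <= block_bound N.
Proof. by apply: sumR_ge0 => i _; exact: block_term_ge0. Qed.

Lemma block_bound_mono N N' : (N <= N')%nat -> block_bound N <= block_bound N'.
Proof.
move=> N_le; rewrite /block_bound [X in _ <= X](big_cat_nat _ (n := N)) //=.
have := @sumR_ge0 _ (index_iota N N') xpredT _ (fun i _ => block_term_ge0 i).
lra.
Qed.

Lemma block_bound_term n N : (n < N)%nat -> 2 * INR (diam n) + height n <= block_bound N.
Proof.
move=> n_lt; apply: Rle_trans (block_bound_mono n_lt).
rewrite /block_bound big_nat_recr //=.
have := block_bound_ge0 n; rewrite /block_bound; lra.
Qed.

(* Going through the base points, distances between components are bounded by heights. *)
Lemma dist_le_heights n k (x : gV (Cv n)) (y : gV (Cv k)) :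
  d (existT _ n x) (existT _ k y) <= height n + height k.
Proof.
have := d_tri (existT _ n x) (existT _ n (x0 n)) (existT _ k y).
have := d_tri (existT _ n (x0 n)) (existT _ 0%nat (x0 0%nat)) (existT _ k y).
have := d_tri (existT _ 0%nat (x0 0%nat)) (existT _ k (x0 k)) (existT _ k y).
have := d_sym (existT _ 0%nat (x0 0%nat)) (existT _ k (x0 k)).
have := le_INR _ _ (leP (gdist_diam x (x0 n))); have := le_INR _ _ (leP (gdist_diam (x0 k) y)).
by rewrite !d_component /height /diam; lra.
Qed.

Lemma indices_below_separation n k (x : gV (Cv n)) (y : gV (Cv k)) : n != k ->
  (n + k < sep_index (nat_up (d (existT _ n x) (existT _ k y))))%nat.
Proof.
move=> n_neq_k; set t := d _ _; rewrite ltnNge; apply/negP => far.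
have := sep_index_spec x y (elimN eqP n_neq_k) far; rewrite -/t.
by have := nat_up_gt (d_ge0 (existT _ n x) (existT _ k y)); rewrite -/t; lra.
Qed.

Definition lower_control (t : R) : R := sqrt (INR (lower_gauge (nat_floor t))).
Definition upper_control (t : R) : R :=
  sqrt (2 * t + 2 * block_bound (runmax sep_index (nat_up t))).

Lemma lower_control_mono : nondecr lower_control.
Proof.
move=> s t _ s_le_t; apply/sqrt_le_1_alt/le_INR/leP.
exact: slow_inverse_mono (nat_floor_mono s_le_t).
Qed.

Lemma upper_control_mono : nondecr upper_control.
Proof.
move=> s t _ s_le_t; apply: sqrt_le_1_alt.
by have := block_bound_mono (runmax_mono sep_index (nat_up_mono s_le_t)); lra.
Qed.

Lemma lower_control_unbounded : to_infty lower_control.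
Proof.
move=> M; have [g g_large] : exists g : nat, M * M <= INR g.
  by have [g g_gt] := INR_archimed 1 (M * M) Rlt_0_1; exists g; lra.
exists (INR (slack g)) => t t_ge; apply/le_sqrt_of_sq/(Rle_trans _ _ _ g_large).
apply/le_INR/leP; apply: leq_trans (slow_inverse_ge (h := slack) (leq_addl _ g)) _.
by apply: slow_inverse_mono; rewrite -{1}(nat_floor_INR (slack g)); exact: nat_floor_mono.
Qed.

Lemma upper_control_unbounded : to_infty upper_control.
Proof.
move=> M; exists (M * M) => t t_ge; apply: le_sqrt_of_sq.
by have := block_bound_ge0 (runmax sep_index (nat_up t)); have := Rle_0_sqr M; rewrite /Rsqr; lra.
Qed.

Lemma embed_same_component n (x y : gV (Cv n)) :
  lower_control (d (existT _ n x) (existT _ n y)) <= sqrt (2 * INR #|diffset x y|)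
    <= upper_control (d (existT _ n x) (existT _ n y)).
Proof.
rewrite d_component /lower_control /upper_control nat_floor_INR.
have := le_INR _ _ (leP (diffset_lower x y)); have := le_INR _ _ (leP (diffset_le_gdist (T_tree n) x y)).
have := pos_INR #|diffset x y|; have := block_bound_ge0 (runmax sep_index (nat_up (INR (gdist x y)))).
by split; apply: sqrt_le_1_alt; lra.
Qed.

Lemma embed_diff_components n k (x : gV (Cv n)) (y : gV (Cv k)) : n != k ->
  lower_control (d (existT _ n x) (existT _ k y))
    <= sqrt ((2 * INR #|diffset x (x0 n)| + height n) + (2 * INR #|diffset y (x0 k)| + height k))
    <= upper_control (d (existT _ n x) (existT _ k y)).
Proof.
move=> n_neq_k; have := indices_below_separation x y n_neq_k.
have := dist_le_heights x y; set t := d _ _ => t_le indices_small.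
have t_ge0 : 0 <= t by exact: d_ge0.
have diff_diam (j : nat) (z : gV (Cv j)) : INR #|diffset z (x0 j)| <= INR (diam j).
  by apply/le_INR/leP; apply: leq_trans (diffset_le_gdist (T_tree j) z (x0 j)) (gdist_diam _ _).
have := pos_INR #|diffset x (x0 n)|; have := pos_INR #|diffset y (x0 k)|.
have := diff_diam _ x; have := diff_diam _ y => ? ? ? ?.
split; apply: sqrt_le_1_alt.
  have := nat_floor_le t_ge0.
  by have := le_INR _ _ (leP (slow_inverse_le slack (nat_floor t))); rewrite /lower_gauge; lra.
have := runmax_ge sep_index (nat_up t) => sep_le.
have := block_bound_term (n := n) (N := runmax sep_index (nat_up t)) ltac:(lia).
have := block_bound_term (n := k) (N := runmax sep_index (nat_up t)) ltac:(lia).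
lra.
Qed.

Lemma covers_coarse_embed : coarse_embeds_l2 d.
Proof.
exists (embed x0 height), lower_control, upper_control.
do 6?split; try exact: embed_l2; try exact: sqrt_pos.
- exact: lower_control_mono.
- exact: upper_control_mono.
- exact: lower_control_unbounded.
- exact: upper_control_unbounded.
move=> [n x] [k y]; case: (eqVneq n k) => [n_eq_k|n_neq_k].
  subst k; exists (sqrt (2 * INR #|diffset x y|)).
  by split; [exact: embed_dist_same | exact: embed_same_component].
eexists; split; first by apply: embed_dist_diff => //; exact: height_ge0.
exact: embed_diff_components.
Qed.

End CoarseEmbedding.

Local Close Scope R_scope.

Theorem mainTheorem2 (m : nat) (hm : (3 <= m)%N) (X : nat -> graph)
  (hconn : forall n, connected (X n))
  (h2conn : forall n, two_connected (X n))
  (htrees : forall n, exists c : nat, forall e : gE (X n), n_trees_avoiding e = c)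
  (hgirth : forall g : nat, exists N : nat, forall n, (N <= n)%N -> girth_ge (X n) g)
  (T : forall n, {set gE (X n)})
  (hT : forall n, spanning_tree (T n))
  (d : {n : nat & gV (homology_cover m (T n))} ->
       {n : nat & gV (homology_cover m (T n))} -> R)
  (hd : @coarse_disjoint_union_metric (fun n => homology_cover m (T n)) d) :
  coarse_embeds_l2 d.
Proof.
(* The base graphs are nonempty, so each cover has a base point on the zero sheet. *)
pose x0 n : gV (homology_cover m (T n)) := (enum_val (Ordinal (proj1 (hconn n))), GRing.zero).
exact: (covers_coarse_embed x0 hgirth hT hd).
Qed.
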